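(* Let $G$ be a finite, simple, connected, undirected graph of order $n\ge 2$ and let $A\subseteq V(G)$ be nonempty. Then $P_A(G)=1$ if and only if $A$ is a (classical) zero forcing set of $G$.
   Context: Classical zero forcing: given a set of black vertices (the rest white), the color change rule turns a white vertex $v$ black if $v$ is the only white neighbor of some black vertex $u$. A set $S$ is a zero forcing set if starting with $S$ black, finitely many applications of this rule make all of $V(G)$ black. Probabilistic process: for a vertex $u$, $N(u)$ is its open neighborhood, $N[u]=N(u)\cup\{u\}$, $\deg(u)=|N(u)|$. Given a current black set $Z$, $F(u\to v)=0$ if $u\notin Z$, or $v\notin N(u)$, or $N[u]\subseteq Z$; otherwise $F(u\to v)=|N[u]\cap Z|/\deg(u)$. One global application of the probabilistic color change rule: black vertices stay black; independently for every pair $(u,v)$ with $u$ black and $v\in N(u)$ white, $u$ forces $v$ with probability $F(u\to v)$; a white vertex becomes black iff some black neighbor forces it. Starting with black set $A$ at step $0$ and applying this rule repeatedly, let $S^k$ be the set of colorings reachable with positive probability after exactly $k$ steps and $P^{(k)}$ the probability distribution on them. Let $T^k\subseteq S^k$ be the colorings whose black set contains a classical zero forcing set of $G$. Define $P_A(G)=P^{(k_0)}(T^{k_0})$ where $k_0$ is the least $k\ge 0$ with $T^k\neq\emptyset$. *)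

From HB Require Import structures.
From mathcomp Require Import all_boot all_order all_algebra.
From Stdlib Require Import Relations ClassicalEpsilon.
Set Implicit Arguments. Unset Strict Implicit. Unset Printing Implicit Defensive.
Import Order.TTheory GRing.Theory Num.Theory.

Section Graph.
Variable T : finType.
Variable e : rel T.

Definition nbhd (u : T) : {set T} := [set w | e u w].
Definition cnbhd (u : T) : {set T} := u |: nbhd u.
Definition deg (u : T) : nat := #|nbhd u|.

Definition force1 (Z Z' : {set T}) : Prop :=
  exists u v, [/\ u \in Z, v \notin Z, e u v,
    (forall w, e u w -> w \notin Z -> w = v) & Z' = v |: Z].

Definition zero_forcing (S : {set T}) : Prop :=
  clos_refl_trans {set T} force1 S [set: T].

Local Open Scope ring_scope.

Definition Fprob (Z : {set T}) (u v : T) : rat :=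
  if [&& u \in Z, e u v & ~~ (cnbhd u \subset Z)]
  then (#|cnbhd u :&: Z|%:R / (deg u)%:R) else 0.

Definition pairs (Z : {set T}) : {set T * T} :=
  [set p : T * T | [&& p.1 \in Z, e p.1 p.2 & p.2 \notin Z]].

(* probability that one global application of the rule takes Z to Z':
   sum over all subsets E of successful forcing events (independent). *)
Definition step (Z Z' : {set T}) : rat :=
  \sum_(E : {set T * T} | E \subset pairs Z)
     ((Z :|: [set v | [exists u, (u, v) \in E]]) == Z')%:R *
     \prod_(p in pairs Z)
        (if p \in E then Fprob Z p.1 p.2 else 1 - Fprob Z p.1 p.2).

Fixpoint Pk (A : {set T}) (k : nat) (Z : {set T}) : rat :=
  match k with
  | 0 => (Z == A)%:R
  | k'.+1 => \sum_(Z0 : {set T}) Pk A k' Z0 * step Z0 Z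
  end.

Definition inTk (A : {set T}) (k : nat) (Z : {set T}) : bool :=
  if excluded_middle_informative
       (0 < Pk A k Z /\ exists S : {set T}, S \subset Z /\ zero_forcing S)
  then true else false.

(* "P_A(G) = p": k0 is the least k with T^k nonempty and P^(k0)(T^(k0)) = p *)
Definition PA_eq (A : {set T}) (p : rat) : Prop :=
  exists k0 : nat,
    [/\ exists Z, inTk A k0 Z,
        forall k, (k < k0)%N -> forall Z, ~~ inTk A k Z
      & \sum_(Z | inTk A k0 Z) Pk A k0 Z = p].

End Graph.

Definition simple_connected (T : finType) (e : rel T) : Prop :=
  [/\ ssrbool.symmetric e, ssrbool.irreflexive e & forall x y, connect e x y].

(* The classical step, in which every classical force Z can perform is
   performed, is a probabilistic event of positive probability, since a
   classical force u -> v has F(u -> v) = 1 and every other event has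
   probability < 1.  Hence the k0-fold iterate Z of the classical step from A
   has positive probability.  If P^(k0)(T^(k0)) = 1, every coloring of positive
   probability lies in T^(k0), so Z contains a zero forcing set; zero forcing
   is monotone under supersets and A reaches Z by classical forces, so A is a
   zero forcing set. *)
From HB Require Import structures.
From mathcomp Require Import all_boot all_order all_algebra.
From Stdlib Require Import Relations ClassicalEpsilon.
From mathcomp Require Import zify.
Set Implicit Arguments. Unset Strict Implicit. Unset Printing Implicit Defensive.
Import Order.TTheory GRing.Theory Num.Theory.

Local Open Scope ring_scope.

Lemma sum_subset_prod (R : comNzRingType) (X : finType) (P : {set X})
    (a b : X -> R) :
  \sum_(E : {set X} | E \subset P) \prod_(p in P) (if p \in E then a p else b p)
  = \prod_(p in P) (a p + b p).
Proof.
pose a' i := if i \in P then a i else 0.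
pose b' i := if i \in P then b i else 1.
rewrite [RHS]big_mkcond /=.
transitivity (\prod_i (a' i + b' i)); last first.
  by apply: eq_bigr => i _; rewrite /a' /b'; case: (i \in P); rewrite ?add0r.
rewrite bigA_distr big_mkcond; apply: eq_bigr => J _; case: ifP => sJP.
  rewrite big_mkcond; apply: eq_bigr => i _; rewrite /a' /b'.
  case: ifP => iP; case: ifP => iJ //.
  by move/subsetP: sJP => /(_ i iJ); rewrite iP.
have [i iJ niP] : exists2 i, i \in J & i \notin P.
  apply/exists_inP; apply: contraFT sJP => /exists_inPn nJP.
  by apply/subsetP => x /nJP /negbNE.
by rewrite (bigD1 i) //= /a' iJ (negbTE niP) mul0r.
Qed.

Lemma psum_gt0 (R : numDomainType) (I : finType) (P : pred I) (F : I -> R) i :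
  (forall j, P j -> 0 <= F j) -> P i -> 0 < F i -> 0 < \sum_(j | P j) F j.
Proof.
move=> F_ge0 Pi Fi_gt0; rewrite (bigD1 i) //=; apply: ltr_pwDl => //.
by apply: sumr_ge0 => j /andP [Pj _]; exact: F_ge0.
Qed.

Lemma full_mass_support (R : numDomainType) (I : finType) (Q : pred I)
    (p : I -> R) i :
  (forall j, 0 <= p j) -> \sum_j p j = 1 -> \sum_(j | Q j) p j = 1 ->
  0 < p i -> Q i.
Proof.
move=> p_ge0 sum1 sumQ1 pi_gt0; apply: contraTT pi_gt0 => nQi.
have : \sum_(j | ~~ Q j) p j = 0.
  by move: sum1; rewrite (bigID Q) /= sumQ1 => /(canRL (addKr 1)); rewrite addNr.
by move/psumr_eq0P => /(_ (fun j _ => p_ge0 j) i nQi) ->; rewrite ltxx.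
Qed.

Section ClassicalForcing.
Variable T : finType.
Variable e : rel T.

Lemma zero_forcing_superset (S Z : {set T}) :
  S \subset Z -> zero_forcing e S -> zero_forcing e Z.
Proof.
move=> SZ zfS.
suff gen : forall S0 W, clos_refl_trans_1n _ (force1 e) S0 W -> W = setT ->
    forall Z0 : {set T}, S0 \subset Z0 -> zero_forcing e Z0.
  exact: gen (clos_rt_rt1n _ _ _ _ zfS) erefl Z SZ.
move=> S0 W; elim=> [X -> Z0 sub | X Y W' [u [v [uX vX euv only_v ->]]] _ IH W'T Z0 sub].
  by rewrite (_ : Z0 = setT); [exact: rt_refl | apply/eqP; rewrite -subTset].
have [vZ0 | vZ0] := boolP (v \in Z0).
  by apply: (IH W'T); rewrite subUset sub1set vZ0 sub.
apply: rt_trans (IH W'T (v |: Z0) (setUS _ sub)); apply: rt_step.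
exists u, v; split => //; first exact: (subsetP sub).
by move=> w euw wZ0; apply: only_v => //; apply: contra wZ0; exact: (subsetP sub).
Qed.

Definition classical_force (Z : {set T}) (u v : T) : bool :=
  [&& u \in Z, e u v, v \notin Z & [forall w, (e u w && (w \notin Z)) ==> (w == v)]].

Definition classical_forces (Z : {set T}) : {set T * T} :=
  [set p | classical_force Z p.1 p.2].

Definition classical_step (Z : {set T}) : {set T} :=
  Z :|: [set v | [exists u, (u, v) \in classical_forces Z]].

Lemma classical_forces_reach (Z : {set T}) (s : seq T) :
  {subset s <= [set v | [exists u, (u, v) \in classical_forces Z]]} ->
  clos_refl_trans _ (force1 e) Z (Z :|: [set x in s]).
Proof.
elim: s => [|x s IH] forced.
  by rewrite (_ : _ :|: _ = Z); [exact: rt_refl | apply/setP => y; rewrite !inE orbF].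
have reach_s : clos_refl_trans _ (force1 e) Z (Z :|: [set y in s]).
  by apply: IH => y ys; apply: forced; rewrite inE ys orbT.
rewrite (_ : _ :|: _ = x |: (Z :|: [set y in s])); last first.
  by apply/setP => y; rewrite !inE orbCA.
have [xin | xout] := boolP (x \in Z :|: [set y in s]).
  by move: xin; rewrite -sub1set => /setUidPr ->.
apply: rt_trans reach_s (rt_step _ _ _ _ _).
have := forced x (mem_head x s); rewrite inE => /existsP [u].
rewrite inE /= => /and4P [uZ eux xZ /forallP unique_x].
exists u, x; split => //; first by rewrite inE uZ.
move=> w euw wout; apply/eqP; apply: (implyP (unique_x w)).
by rewrite euw /=; apply: contra wout => wZ; rewrite inE wZ.
Qed.

Lemma classical_step_reach (Z : {set T}) :
  clos_refl_trans _ (force1 e) Z (classical_step Z).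
Proof.
have := classical_forces_reach
  (s := enum [set v | [exists u, (u, v) \in classical_forces Z]]).
by rewrite set_enum; apply=> x; rewrite mem_enum.
Qed.

End ClassicalForcing.

Section ProbabilisticForcing.
Variable T : finType.
Variable e : rel T.
Hypothesis e_irr : irreflexive e.

Lemma card_cnbhd (u : T) : #|cnbhd e u| = (deg e u).+1.
Proof. by rewrite /cnbhd cardsU1 /nbhd inE e_irr. Qed.

Lemma deg_gt0 (u v : T) : e u v -> (0 < deg e u)%N.
Proof. by move=> euv; apply/card_gt0P; exists v; rewrite inE. Qed.

Lemma Fprob_white (Z : {set T}) (u v : T) :
  u \in Z -> e u v -> v \notin Z ->
  Fprob e Z u v = #|cnbhd e u :&: Z|%:R / (deg e u)%:R.
Proof.
move=> uZ euv vZ; rewrite /Fprob uZ euv /=; case: ifP => // /subsetP /(_ v).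
by rewrite !inE euv orbT (negbTE vZ) => /(_ isT).
Qed.

Lemma Fprob_ge0 (Z : {set T}) (u v : T) : 0 <= Fprob e Z u v.
Proof. by rewrite /Fprob; case: ifP => // _; exact: divr_ge0. Qed.

Lemma Fprob_le1 (Z : {set T}) (u v : T) : Fprob e Z u v <= 1.
Proof.
rewrite /Fprob; case: ifP => // /and3P [_ euv nsub].
rewrite ler_pdivrMr ?ltr0n ?(deg_gt0 euv) // mul1r ler_nat -ltnS -card_cnbhd.
apply: proper_card; rewrite properEneq subsetIl andbT.
by apply: contra nsub => /eqP <-; rewrite subsetIr.
Qed.

(* A classical force succeeds with certainty: its source has exactly one
   white vertex in its closed neighbourhood. *)
Lemma Fprob_classical (Z : {set T}) (u v : T) :
  classical_force e Z u v -> Fprob e Z u v = 1.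
Proof.
case/and4P=> uZ euv vZ /forallP only_v; rewrite Fprob_white //.
have white_v : cnbhd e u :\: Z = [set v].
  apply/setP => x; rewrite /cnbhd /nbhd !inE; apply/idP/idP.
    case/andP=> xZ /orP [/eqP xu | eux]; first by rewrite xu uZ in xZ.
    by have := only_v x; rewrite eux xZ.
  by move/eqP ->; rewrite vZ euv orbT.
have := cardsID Z (cnbhd e u); rewrite white_v cards1 card_cnbhd addn1 => [[->]].
by rewrite divff // pnatr_eq0 -lt0n (deg_gt0 euv).
Qed.

(* Any other possible force fails with positive probability: its source has
   at least two white vertices in its closed neighbourhood. *)
Lemma Fprob_nonclassical (Z : {set T}) (u v : T) :
  u \in Z -> e u v -> v \notin Z -> ~~ classical_force e Z u v ->
  Fprob e Z u v < 1.
Proof.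
move=> uZ euv vZ; rewrite /classical_force uZ euv vZ /= => /forallPn [w].
rewrite negb_imply => /andP [/andP [euw wZ] wv].
rewrite Fprob_white // ltr_pdivrMr ?ltr0n ?(deg_gt0 euv) // mul1r ltr_nat.
have two_white : (2 <= #|cnbhd e u :\: Z|)%N.
  have <- : #|[set v; w]| = 2%N by rewrite cards2 eq_sym wv.
  apply: subset_leq_card; apply/subsetP => x.
  by rewrite /cnbhd /nbhd !inE => /orP [] /eqP ->; rewrite ?vZ ?wZ ?euv ?euw !orbT.
by have := cardsID Z (cnbhd e u); rewrite card_cnbhd; lia.
Qed.

Definition event_prob (Z : {set T}) (E : {set T * T}) : rat :=
  \prod_(p in pairs e Z)
     (if p \in E then Fprob e Z p.1 p.2 else 1 - Fprob e Z p.1 p.2).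

Lemma event_prob_ge0 (Z : {set T}) (E : {set T * T}) : 0 <= event_prob Z E.
Proof.
apply: prodr_ge0 => p _; case: ifP => _; first exact: Fprob_ge0.
by rewrite subr_ge0 Fprob_le1.
Qed.

Lemma step_ge0 (Z Z' : {set T}) : 0 <= step e Z Z'.
Proof.
by apply: sumr_ge0 => E _; apply: mulr_ge0; [exact: ler0n | exact: event_prob_ge0].
Qed.

Lemma step_sum (Z : {set T}) : \sum_Z' step e Z Z' = 1.
Proof.
rewrite /step exchange_big /=.
transitivity (\sum_(E : {set T * T} | E \subset pairs e Z) event_prob Z E).
  apply: eq_bigr => E _; rewrite -big_distrl /=.
  rewrite (bigD1 (Z :|: [set v | [exists u, (u, v) \in E]])) //= eqxx.
  rewrite big1 ?addr0 ?mul1r // => Z'' nZ''.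
  by rewrite eq_sym (negbTE nZ'').
rewrite (sum_subset_prod (pairs e Z) (fun p => Fprob e Z p.1 p.2)).
by apply: big1 => p _; rewrite addrC subrK.
Qed.

(* The classical step happens with positive probability: it is the event in
   which exactly the classical forces succeed. *)
Lemma step_classical_gt0 (Z : {set T}) : 0 < step e Z (classical_step e Z).
Proof.
have classical_pairs : classical_forces e Z \subset pairs e Z.
  by apply/subsetP => p; rewrite !inE => /and4P [-> -> -> _].
apply: (psum_gt0 _ classical_pairs).
  by move=> E _; apply: mulr_ge0; [exact: ler0n | exact: event_prob_ge0].
rewrite eqxx mul1r; apply: prodr_gt0 => p; rewrite !inE => /and3P [uZ euv vZ].
case: ifP => cl; first by rewrite Fprob_classical ?ltr01.
by rewrite subr_gt0 Fprob_nonclassical // cl.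
Qed.

Lemma Pk_ge0 (A : {set T}) (k : nat) (Z : {set T}) : 0 <= Pk e A k Z.
Proof.
elim: k Z => [|k IH] Z /=; first exact: ler0n.
by apply: sumr_ge0 => Z0 _; apply: mulr_ge0 => //; exact: step_ge0.
Qed.

Lemma Pk_sum (A : {set T}) (k : nat) : \sum_Z Pk e A k Z = 1.
Proof.
elim: k => [|k IH] /=.
  by rewrite (bigD1 A) //= eqxx big1 ?addr0 // => Z /negbTE ->.
rewrite exchange_big /= -[RHS]IH; apply: eq_bigr => Z0 _.
by rewrite -big_distrr /= step_sum mulr1.
Qed.

Definition classical_iter (A : {set T}) (k : nat) : {set T} :=
  iter k (classical_step e) A.

Lemma classical_iter_reach (A : {set T}) (k : nat) :
  clos_refl_trans _ (force1 e) A (classical_iter A k).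
Proof.
elim: k => [|k IH]; first exact: rt_refl.
exact: rt_trans IH (classical_step_reach _ _).
Qed.

Lemma Pk_classical_iter_gt0 (A : {set T}) (k : nat) :
  0 < Pk e A k (classical_iter A k).
Proof.
elim: k => [|k IH] /=; first by rewrite eqxx ltr01.
apply: (psum_gt0 (i := classical_iter A k)) => //.
  by move=> Z0 _; apply: mulr_ge0; [exact: Pk_ge0 | exact: step_ge0].
by apply: mulr_gt0 => //; exact: step_classical_gt0.
Qed.

End ProbabilisticForcing.

Section ForcingProbability.
Variable T : finType.
Variable e : rel T.

Lemma inTkP (A : {set T}) (k : nat) (Z : {set T}) : inTk e A k Z <->
  0 < Pk e A k Z /\ exists S : {set T}, S \subset Z /\ zero_forcing e S.
Proof. by rewrite /inTk; case: excluded_middle_informative. Qed.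

(* If A is zero forcing, T^0 = S^0 = {A}, so P_A(G) = 1 with k0 = 0. *)
Lemma zero_forcing_PA_one (A : {set T}) : zero_forcing e A -> PA_eq e A 1.
Proof.
move=> zfA; have A_in_T0 : inTk e A 0 A.
  by apply/inTkP; split; [rewrite /= eqxx ltr01 | exists A].
exists 0%N; split=> //; first by exists A.
by rewrite (bigD1 A) //= eqxx big1 ?addr0 // => Z /andP [_ /negbTE ->].
Qed.

(* If P_A(G) = 1, the classical iterate at step k0 has positive probability,
   hence lies in T^(k0) and contains a zero forcing set; A reaches it by
   classical forces, so A is zero forcing. *)
Lemma PA_one_zero_forcing (A : {set T}) :
  irreflexive e -> PA_eq e A 1 -> zero_forcing e A.
Proof.
move=> e_irr [k0 [_ _ mass_T]].
have /inTkP [_ [S [S_sub zfS]]] : inTk e A k0 (classical_iter e A k0).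
  apply: (full_mass_support (p := Pk e A k0)) mass_T _.
  - exact: Pk_ge0.
  - exact: Pk_sum.
  - exact: Pk_classical_iter_gt0.
exact: rt_trans (classical_iter_reach e A k0) (zero_forcing_superset S_sub zfS).
Qed.

End ForcingProbability.

Theorem mainTheorem2 (T : finType) (e : rel T) (A : {set T}) :
  simple_connected e -> (1 < #|T|)%N -> A != set0 ->
  (PA_eq e A 1%R <-> zero_forcing e A).
Proof.
move=> [_ e_irr _] _ _; split.
- exact: PA_one_zero_forcing.
- exact: zero_forcing_PA_one.
Qed.
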